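(* Let $\Psi$ be a context and $\Phi$ a context all of whose variables have level $<k$. Then $\Psi\vdash\Phi^k\ \mathsf{ctx}$ if and only if $\lfloor\Psi\rfloor_k\vdash\Phi^k\ \mathsf{ctx}$.
   Context: Multi-level contextual LF. Every variable $x^n$ carries a level $n\in\mathbb{N}$. Syntax: sorts $s ::= \mathsf{type}\mid\mathsf{kind}$; atomic types $P ::= s \mid \mathsf{a} \mid P\,(\hat\Gamma.N)$; types $A,B,K ::= P \mid \Pi x^n{:}A[\Phi^n].B$; atomic terms $R ::= x^n[\sigma] \mid \mathsf{c} \mid R\,(\hat\Gamma.N)$; normal terms $M,N ::= R \mid \lambda x^n.M$; substitutions $\sigma ::= \cdot \mid \sigma,\hat\Gamma^n.M \mid \sigma, x^n$ (the last is a renaming entry); contexts $\Psi,\Phi,\Gamma ::= \cdot \mid \Psi, x^n{:}A[\Phi^n]$. Constants $\mathsf a,\mathsf c$ come from a fixed signature $\Sigma$; $\hat\Gamma$ is the list of variable names of $\Gamma$. $\Phi^n$ indicates that all variables of $\Phi$ have level $<n$. Merging: $\cdot\oplus\Phi=\Phi$; $\Psi\oplus\cdot=\Psi$; $(\Psi,x^n{:}A[\Gamma^n])\oplus(\Phi,y^k{:}B[\Gamma'^k]) = ((\Psi,x^n{:}A[\Gamma^n])\oplus\Phi), y^k{:}B[\Gamma'^k]$ if $k\le n$, and $=(\Psi\oplus(\Phi,y^k{:}B[\Gamma'^k])),x^n{:}A[\Gamma^n]$ otherwise. Chopping: $\lfloor\cdot\rfloor_n=\cdot$; $\lfloor\Psi,x^k{:}A[\Phi^k]\rfloor_n=\lfloor\Psi\rfloor_n$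 if $k<n$, and $=\Psi,x^k{:}A[\Phi^k]$ otherwise. Context well-formedness $\Psi\vdash\Phi^n\ \mathsf{ctx}$: $\Psi\vdash\cdot\ \mathsf{ctx}$; and $\Psi\vdash \Phi^n,x^k{:}A[\Gamma^k]\ \mathsf{ctx}$ (for $k<n$) if $\Psi\vdash\Phi^n\ \mathsf{ctx}$, $(\lfloor\Psi\rfloor_n\oplus\lfloor\Phi^n\rfloor_k)\oplus\Gamma^k\vdash A\Leftarrow\mathsf{type}$ and $\lfloor\Psi\rfloor_n\oplus\lfloor\Phi^n\rfloor_k\vdash\Gamma^k\ \mathsf{ctx}$. The remaining (bidirectional) judgments, defined mutually: $\Psi\vdash\mathsf{type}\Leftarrow\mathsf{kind}$; $\Psi\vdash P\Leftarrow\mathsf{type}$ if $\Psi\vdash P\Rightarrow\mathsf{type}$; $\Psi\vdash\Pi x^n{:}A[\Phi^n].B\Leftarrow s$ if $\lfloor\Psi\rfloor_n\oplus\Phi^n\vdash A\Leftarrow\mathsf{type}$, $\Psi\vdash\Phi^n\ \mathsf{ctx}$ and $\Psi\oplus x^n{:}A[\Phi^n]\vdash B\Leftarrow s$; $\Psi\vdash\mathsf a\Rightarrow\Sigma(\mathsf a)$, $\Psi\vdash\mathsf c\Rightarrow\Sigma(\mathsf c)$; $\Psi\vdash P\,(\hat\Phi^n.N)\Rightarrow[\hat\Phi^n.N/x^n]K$ if $\Psi\vdash P\Rightarrow\Pi x^n{:}A[\Phi^n].K$ and $\lfloor\Psi\rfloor_n\oplus\Phi^n\vdash N\Leftarrow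 A$ (same rule for $R\,(\hat\Phi^n.N)$); $\Psi\vdash x^n[\sigma]\Rightarrow[\sigma]_{\Phi^n}A$ if $\Psi(x^n)=A[\Phi^n]$ and $\Psi\vdash\sigma\Leftarrow\Phi^n$; $\Psi\vdash R\Leftarrow Q$ if $\Psi\vdash R\Rightarrow P$ and $P=Q$; $\Psi\vdash\lambda x^n.M\Leftarrow\Pi x^n{:}A[\Phi^n].B$ if $\Psi\oplus x^n{:}A[\Phi^n]\vdash M\Leftarrow B$; $\Psi\vdash\cdot\Leftarrow\cdot$; $\Psi\vdash\sigma,\hat\Gamma^k.M\Leftarrow\Phi^n,x^k{:}A[\Gamma^k]$ if $\Psi\vdash\sigma\Leftarrow\Phi^n$ and $\lfloor\Psi\rfloor_k\oplus[\sigma]_{\Phi^n}(\Gamma^k)\vdash M\Leftarrow[\lfloor\sigma\rfloor_k\oplus\mathrm{id}(\hat\Gamma^k)]A$; $\Psi\vdash\sigma,y^k\Leftarrow\Phi^n,x^k{:}A[\Gamma^k]$ if $\Psi\vdash\sigma\Leftarrow\Phi^n$ and $\Psi(y^k)=[\sigma]_{\Phi^n}(A[\Gamma^k])$. Here $[\hat\Phi.N/x]$ and $[\sigma]$ are the (capture-avoiding, $\beta$-redex-eliminating) hereditary single and simultaneous substitutions, and $\lfloor\sigma\rfloor_k$, $\sigma\oplus\tau$, $\mathrm{id}(\hat\Gamma)$ are the analogous chopping, merging and identity operations on substitutions. *)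

From Stdlib Require Import List Arith Bool.
Import ListNotations.

(* A variable x^n : a name together with its level. *)
Definition var : Type := (nat * nat)%type.
Definition lv (x : var) : nat := snd x.
Definition var_eqb (x y : var) : bool :=
  Nat.eqb (fst x) (fst y) && Nat.eqb (snd x) (snd y).

Definition const : Type := nat.

Inductive sort : Type := Stype | Skind.

Inductive atyp : Type :=            (* P ::= s | a | P (Γ^.N) *)
  | ASort  : sort -> atyp
  | AConst : const -> atyp
  | AApp   : atyp -> list var -> nterm -> atyp
with typ : Type :=                  (* A, B, K ::= P | Π x^n:A[Φ^n]. B *)
  | TAtom : atyp -> typ
  | TPi   : var -> typ -> ctx -> typ -> typ
with ctx : Type :=                  (* Ψ ::= · | Ψ, x^n:A[Φ^n] *)
  | CNil  : ctx
  | CCons : ctx -> var -> typ -> ctx -> ctx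
with aterm : Type :=                (* R ::= x^n[σ] | c | R (Γ^.N) *)
  | RVar   : var -> sub -> aterm
  | RConst : const -> aterm
  | RApp   : aterm -> list var -> nterm -> aterm
with nterm : Type :=                (* M ::= R | λ x^n. M *)
  | NAt  : aterm -> nterm
  | NLam : var -> nterm -> nterm
with sub : Type :=                  (* σ ::= · | σ, Γ^^n.M | σ, x^n *)
  | SNil : sub
  | SDef : sub -> list var -> nat -> nterm -> sub
  | SRen : sub -> var -> sub.

Fixpoint hat (Ψ : ctx) : list var :=
  match Ψ with CNil => [] | CCons Ψ' x _ _ => hat Ψ' ++ [x] end.

Fixpoint chop (Ψ : ctx) (n : nat) : ctx :=
  match Ψ with
  | CNil => CNil
  | CCons Ψ' x A Φ => if lv x <? n then chop Ψ' n else CCons Ψ' x A Φ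
  end.

Fixpoint merge (Ψ : ctx) : ctx -> ctx :=
  fix mergeΨ (Φ : ctx) : ctx :=
  match Φ with
  | CNil => Ψ
  | CCons Φ' y B G =>
      match Ψ with
      | CNil => Φ
      | CCons Ψ' x A G' =>
          if lv y <=? lv x then CCons (mergeΨ Φ') y B G
          else CCons (merge Ψ' Φ) x A G'
      end
  end.

Fixpoint lookup (Ψ : ctx) (x : var) : option (typ * ctx) :=
  match Ψ with
  | CNil => None
  | CCons Ψ' y A Φ => if var_eqb x y then Some (A, Φ) else lookup Ψ' x
  end.

(* all (top-level) variables of Φ have level < n, i.e. Φ is a Φ^n *)
Fixpoint ctx_below (n : nat) (Φ : ctx) : Prop :=
  match Φ with
  | CNil => True
  | CCons Φ' x _ _ => lv x < n /\ ctx_below n Φ'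
  end.

Definition entry_level_top (σ : sub) : nat :=
  match σ with SNil => 0 | SDef _ _ n _ => n | SRen _ y => lv y end.

Definition sub_tail (σ : sub) : sub :=
  match σ with SNil => SNil | SDef σ' _ _ _ => σ' | SRen σ' _ => σ' end.

Fixpoint chop_sub (σ : sub) (n : nat) : sub :=
  match σ with
  | SNil => SNil
  | SDef σ' G k M => if k <? n then chop_sub σ' n else σ
  | SRen σ' y => if lv y <? n then chop_sub σ' n else σ
  end.

Definition with_tail (σ τ : sub) : sub :=
  match σ with SNil => τ | SDef _ G k M => SDef τ G k M | SRen _ y => SRen τ y end.

Fixpoint merge_sub (σ : sub) : sub -> sub :=
  fix mergeσ (τ : sub) : sub :=
  match τ with
  | SNil => σ
  | SDef τ' G k M =>
      match σ with
      | SNil => τ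
      | SDef σ' _ _ _ | SRen σ' _ =>
          if k <=? entry_level_top σ then SDef (mergeσ τ') G k M
          else with_tail σ (merge_sub σ' τ)
      end
  | SRen τ' y =>
      match σ with
      | SNil => τ
      | SDef σ' _ _ _ | SRen σ' _ =>
          if lv y <=? entry_level_top σ then SRen (mergeσ τ') y
          else with_tail σ (merge_sub σ' τ)
      end
  end.

Definition id_sub (G : list var) : sub := fold_left SRen G SNil.

Inductive entry : Type :=
  | EDef : list var -> nterm -> entry
  | ERen : var -> entry.

Definition env : Type := list (var * entry).

Fixpoint sub_entries (σ : sub) : list entry :=
  match σ with
  | SNil => []
  | SDef σ' G _ M => sub_entries σ' ++ [EDef G M]
  | SRen σ' y => sub_entries σ' ++ [ERen y]
  end.

Definition env_of (names : list var) (σ : sub) : option env :=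
  if length names =? length (sub_entries σ)
  then Some (combine names (sub_entries σ)) else None.

Definition env_lookup (θ : env) (x : var) : option entry :=
  match find (fun p => var_eqb x (fst p)) (rev θ) with
  | Some (_, e) => Some e | None => None
  end.

(* remove the bound names G from the domain of θ (shadowing) *)
Definition env_remove (G : list var) (θ : env) : env :=
  filter (fun p => negb (existsb (var_eqb (fst p)) G)) θ.

Inductive hs_atyp : env -> atyp -> atyp -> Prop :=
  | hsa_sort : forall θ s, hs_atyp θ (ASort s) (ASort s)
  | hsa_const : forall θ a, hs_atyp θ (AConst a) (AConst a)
  | hsa_app : forall θ P P' G N N',
      hs_atyp θ P P' -> hs_nterm (env_remove G θ) N N' ->
      hs_atyp θ (AApp P G N) (AApp P' G N')
with hs_typ : env -> typ -> typ -> Prop :=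
  | hst_atom : forall θ P P', hs_atyp θ P P' -> hs_typ θ (TAtom P) (TAtom P')
  | hst_pi : forall θ x A A' Φ Φ' B B',
      hs_ctx θ Φ Φ' -> hs_typ (env_remove (hat Φ) θ) A A' ->
      hs_typ (env_remove [x] θ) B B' ->
      hs_typ θ (TPi x A Φ B) (TPi x A' Φ' B')
with hs_ctx : env -> ctx -> ctx -> Prop :=
  | hsc_nil : forall θ, hs_ctx θ CNil CNil
  | hsc_cons : forall θ G G' y C C' D D',
      hs_ctx θ G G' ->
      hs_ctx (env_remove (hat G) θ) D D' ->
      hs_typ (env_remove (hat G ++ hat D) θ) C C' ->
      hs_ctx θ (CCons G y C D) (CCons G' y C' D')
with hs_nterm : env -> nterm -> nterm -> Prop :=
  | hsn_at : forall θ R M, hs_aterm θ R M -> hs_nterm θ (NAt R) M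
  | hsn_lam : forall θ x M M',
      hs_nterm (env_remove [x] θ) M M' -> hs_nterm θ (NLam x M) (NLam x M')
with hs_aterm : env -> aterm -> nterm -> Prop :=
  | hsr_var_free : forall θ x σ σ',
      hs_sub θ σ σ' -> env_lookup θ x = None ->
      hs_aterm θ (RVar x σ) (NAt (RVar x σ'))
  | hsr_var_ren : forall θ x y σ σ',
      hs_sub θ σ σ' -> env_lookup θ x = Some (ERen y) ->
      hs_aterm θ (RVar x σ) (NAt (RVar y σ'))
  | hsr_var_def : forall θ x G N σ σ' θ' M,
      hs_sub θ σ σ' -> env_lookup θ x = Some (EDef G N) ->
      env_of G σ' = Some θ' -> hs_nterm θ' N M ->
      hs_aterm θ (RVar x σ) M
  | hsr_const : forall θ c, hs_aterm θ (RConst c) (NAt (RConst c))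
  | hsr_app_at : forall θ R R0 G N N',
      hs_aterm θ R (NAt R0) -> hs_nterm (env_remove G θ) N N' ->
      hs_aterm θ (RApp R G N) (NAt (RApp R0 G N'))
  | hsr_app_beta : forall θ R y M1 G N N' M,
      hs_aterm θ R (NLam y M1) -> hs_nterm (env_remove G θ) N N' ->
      hs_nterm [(y, EDef G N')] M1 M ->
      hs_aterm θ (RApp R G N) M
with hs_sub : env -> sub -> sub -> Prop :=
  | hss_nil : forall θ, hs_sub θ SNil SNil
  | hss_def : forall θ σ σ' G k M M',
      hs_sub θ σ σ' -> hs_nterm (env_remove G θ) M M' ->
      hs_sub θ (SDef σ G k M) (SDef σ' G k M')
  | hss_ren_free : forall θ σ σ' y,
      hs_sub θ σ σ' -> env_lookup θ y = None -> hs_sub θ (SRen σ y) (SRen σ' y)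
  | hss_ren_ren : forall θ σ σ' y z,
      hs_sub θ σ σ' -> env_lookup θ y = Some (ERen z) ->
      hs_sub θ (SRen σ y) (SRen σ' z)
  | hss_ren_def : forall θ σ σ' y G N,
      hs_sub θ σ σ' -> env_lookup θ y = Some (EDef G N) ->
      hs_sub θ (SRen σ y) (SDef σ' G (lv y) N).

Definition single (x : var) (A : typ) (Φ : ctx) : ctx := CCons CNil x A Φ.

Inductive ctx_wf (Σ : const -> option typ) : ctx -> nat -> ctx -> Prop :=
  (* Ψ ⊢ Φ^n ctx *)
  | cw_nil : forall Ψ n, ctx_wf Σ Ψ n CNil
  | cw_cons : forall Ψ n Φ x A Γ,
      lv x < n ->
      ctx_wf Σ Ψ n Φ ->
      typ_chk Σ (merge (merge (chop Ψ n) (chop Φ (lv x))) Γ) A Stype ->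
      ctx_wf Σ (merge (chop Ψ n) (chop Φ (lv x))) (lv x) Γ ->
      ctx_wf Σ Ψ n (CCons Φ x A Γ)
with typ_chk (Σ : const -> option typ) : ctx -> typ -> sort -> Prop :=
  | tc_type : forall Ψ, typ_chk Σ Ψ (TAtom (ASort Stype)) Skind
  | tc_atom : forall Ψ P,
      atyp_syn Σ Ψ P (TAtom (ASort Stype)) -> typ_chk Σ Ψ (TAtom P) Stype
  | tc_pi : forall Ψ x A Φ B s,
      typ_chk Σ (merge (chop Ψ (lv x)) Φ) A Stype ->
      ctx_wf Σ Ψ (lv x) Φ ->
      typ_chk Σ (merge Ψ (single x A Φ)) B s ->
      typ_chk Σ Ψ (TPi x A Φ B) s
with atyp_syn (Σ : const -> option typ) : ctx -> atyp -> typ -> Prop :=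
  | as_const : forall Ψ a K, Σ a = Some K -> atyp_syn Σ Ψ (AConst a) K
  | as_app : forall Ψ P x A Φ K N K',
      atyp_syn Σ Ψ P (TPi x A Φ K) ->
      tm_chk Σ (merge (chop Ψ (lv x)) Φ) N A ->
      hs_typ [(x, EDef (hat Φ) N)] K K' ->
      atyp_syn Σ Ψ (AApp P (hat Φ) N) K'
with atm_syn (Σ : const -> option typ) : ctx -> aterm -> typ -> Prop :=
  | at_const : forall Ψ c A, Σ c = Some A -> atm_syn Σ Ψ (RConst c) A
  | at_app : forall Ψ R x A Φ K N K',
      atm_syn Σ Ψ R (TPi x A Φ K) ->
      tm_chk Σ (merge (chop Ψ (lv x)) Φ) N A ->
      hs_typ [(x, EDef (hat Φ) N)] K K' ->
      atm_syn Σ Ψ (RApp R (hat Φ) N) K'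
  | at_var : forall Ψ x σ A Φ θ A',
      lookup Ψ x = Some (A, Φ) ->
      sub_chk Σ Ψ σ (lv x) Φ ->
      env_of (hat Φ) σ = Some θ ->
      hs_typ θ A A' ->
      atm_syn Σ Ψ (RVar x σ) A'
with tm_chk (Σ : const -> option typ) : ctx -> nterm -> typ -> Prop :=
  | tm_at : forall Ψ R P,
      atm_syn Σ Ψ R (TAtom P) -> tm_chk Σ Ψ (NAt R) (TAtom P)
  | tm_lam : forall Ψ x M A Φ B,
      tm_chk Σ (merge Ψ (single x A Φ)) M B ->
      tm_chk Σ Ψ (NLam x M) (TPi x A Φ B)
with sub_chk (Σ : const -> option typ) : ctx -> sub -> nat -> ctx -> Prop :=
  | sc_nil : forall Ψ n, sub_chk Σ Ψ SNil n CNil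
  | sc_def : forall Ψ σ n Φ x A Γ M θ Γ' θ' A',
      lv x < n ->
      sub_chk Σ Ψ σ n Φ ->
      env_of (hat Φ) σ = Some θ ->
      hs_ctx θ Γ Γ' ->
      env_of (hat (merge (chop Φ (lv x)) Γ))
             (merge_sub (chop_sub σ (lv x)) (id_sub (hat Γ))) = Some θ' ->
      hs_typ θ' A A' ->
      tm_chk Σ (merge (chop Ψ (lv x)) Γ') M A' ->
      sub_chk Σ Ψ (SDef σ (hat Γ) (lv x) M) n (CCons Φ x A Γ)
  | sc_ren : forall Ψ σ n Φ x A Γ y θ Γ' A',
      lv x < n -> lv y = lv x ->
      sub_chk Σ Ψ σ n Φ ->
      env_of (hat Φ) σ = Some θ ->
      hs_ctx θ Γ Γ' ->
      hs_typ (env_remove (hat Γ) θ) A A' ->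
      lookup Ψ y = Some (A', Γ') ->
      sub_chk Σ Ψ (SRen σ y) n (CCons Φ x A Γ).

From Stdlib Require Import Arith.

(* The rules for [Ψ ⊢ Φ^n ctx] consult [Ψ] only through [⌊Ψ⌋_n], and chopping
   at a fixed level is idempotent. *)

Lemma chop_idem (Ψ : ctx) (n : nat) : chop (chop Ψ n) n = chop Ψ n.
Proof.
  induction Ψ as [|Ψ IH x A Φ _]; simpl; auto.
  destruct (lv x <? n) eqn:Hlv; auto.
  simpl. rewrite Hlv. reflexivity.
Qed.

Lemma ctx_wf_chop_eq (Σ : const -> option typ) (Ψ Ψ' : ctx) (n : nat) (Φ : ctx) :
  chop Ψ n = chop Ψ' n -> ctx_wf Σ Ψ n Φ -> ctx_wf Σ Ψ' n Φ.
Proof.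
  intros Hchop.
  induction Φ as [|Φ IH x A Γ _]; intros Hwf.
  - constructor.
  - inversion Hwf; subst.
    rewrite Hchop in *.
    apply cw_cons; auto.
Qed.

Theorem mainTheorem5 :
  forall (Σ : const -> option typ) (Ψ Φ : ctx) (k : nat),
    ctx_below k Φ ->
    (ctx_wf Σ Ψ k Φ <-> ctx_wf Σ (chop Ψ k) k Φ).
Proof.
  intros Σ Ψ Φ k _.
  split; apply ctx_wf_chop_eq; rewrite chop_idem; reflexivity.
Qed.
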